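(* Let $k$ be a field, $x$ an indeterminate, and $R=k[x, x^{2/3^n} : n\ge 1]$, i.e. the monoid algebra over $k$ of the additive monoid $M\subseteq\mathbb{Q}_{\ge0}$ generated by $1$ and $2/3^n$ for all $n\ge1$. Then $1$ is the unique atom of $M$ (every $2/3^n$ is a sum of other nonzero elements of $M$); consequently $x$ is irreducible in $R$, while $x^{2/3}$ is not a product of irreducible elements of $R$. In particular, since $x\cdot x = (x^{2/3})^3$, the set of non-atomic nonzero nonunits of $R$ is not multiplicatively closed.
   Context: An atom of a commutative monoid $M$ (written additively, with no nonzero units) is a nonzero element not expressible as a sum of two nonzero elements. An element of an integral domain is atomic if it is a finite product of irreducible elements. *)

From HB Require Import structures.
From mathcomp Require Import all_boot all_order all_algebra.
Set Implicit Arguments. Unset Strict Implicit. Unset Printing Implicit Defensive.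
Import Order.TTheory GRing.Theory Num.Theory.
Local Open Scope ring_scope.

(** The additive monoid M ⊆ Q_{>=0} generated by 1 and 2/3^n (n >= 1):
    q ∈ M iff q = a·1 + Σ_{n ∈ s} 2/3^(n+1) for some a : nat, s : seq nat
    (s is a multiset of exponents, so each generator may be used repeatedly). *)
Definition inM (q : rat) : Prop :=
  exists (a : nat) (s : seq nat),
    q = a%:R + \sum_(n <- s) (2%:R / (3%:R ^+ n.+1) : rat).

Definition atomM (q : rat) : Prop :=
  inM q /\ q != 0 /\
  ~ (exists a b, inM a /\ inM b /\ a != 0 /\ b != 0 /\ q = a + b).

(** The monoid algebra k[M] (inside k[Q]) is modelled by formal finite sums
    Σ c_i x^{e_i}, represented by lists of (coefficient, exponent) pairs,
    up to equality of coefficient functions. *)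
Section MonoidAlgebra.
Variable k : fieldType.

Definition mpoly := seq (k * rat).

Definition mcoef (f : mpoly) (q : rat) : k :=
  \sum_(p <- f | p.2 == q) p.1.

Definition meq (f g : mpoly) : Prop := forall q, mcoef f q = mcoef g q.

Definition mzero (f : mpoly) : Prop := forall q, mcoef f q = 0.

Definition mone : mpoly := [:: (1, 0)].

Definition mmul (f g : mpoly) : mpoly :=
  [seq (a.1 * b.1, a.2 + b.2) | a <- f, b <- g].

Definition mprod (fs : seq mpoly) : mpoly := foldr mmul mone fs.

Definition inR (f : mpoly) : Prop := forall q, mcoef f q != 0 -> inM q.

Definition unitR (u : mpoly) : Prop :=
  inR u /\ exists v, inR v /\ meq (mmul u v) mone.

Definition irreducibleR (f : mpoly) : Prop :=
  inR f /\ ~ mzero f /\ ~ unitR f /\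
  forall g h, inR g -> inR h -> meq f (mmul g h) -> unitR g \/ unitR h.

Definition atomicR (f : mpoly) : Prop :=
  exists fs : seq mpoly, (forall g, g \in fs -> irreducibleR g) /\ meq f (mprod fs).

Definition nonatomicR (f : mpoly) : Prop :=
  inR f /\ ~ mzero f /\ ~ unitR f /\ ~ atomicR f.

Definition mmono (q : rat) : mpoly := [:: (1, q)].

End MonoidAlgebra.

From HB Require Import structures.
From mathcomp Require Import all_boot all_order all_algebra.
From mathcomp Require Import ring lra zify.
Import Order.TTheory GRing.Theory Num.Theory.
Local Open Scope ring_scope.
Set Implicit Arguments. Unset Strict Implicit.

(** Every element of M below 1 is of the form 2m/3^N, so 1 is
  not a sum of two nonzero elements (this would give 3^N = 2(...)), while
  every other nonzero element splits, using 1 or g_n = 3 g_(n+1).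

  For s = ±1 the s-extremal exponent of a product is the
  sum of the s-extremal exponents of the factors.  Consequently a factor-
  isation of a scalar multiple of a monomial x^e consists of scalar
  multiples of monomials, which gives: c·x^e is irreducible iff e is an atom
  of M, and a product of irreducibles that is a monomial x^e has e ∈ N.
  So x is irreducible, x^(2/3) and x^(4/3) are not atomic, and their product
  x^2 = x·x is atomic. *)

(** ** The monoid M *)

Definition gen (n : nat) : rat := 2%:R / 3%:R ^+ n.+1.

Definition decomposable (q : rat) : Prop :=
  exists a b, inM a /\ inM b /\ a != 0 /\ b != 0 /\ q = a + b.

Lemma gen_gt0 n : 0 < gen n.
Proof. by rewrite /gen divr_gt0 // exprn_gt0. Qed.

Lemma gen_lt1 n : gen n < 1.
Proof.
rewrite /gen ltr_pdivrMr ?exprn_gt0 // mul1r -natrX ltr_nat expnS.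
by have := expn_gt0 3 n; lia.
Qed.

Lemma gen_split n : gen n = gen n.+1 + gen n.+1 + gen n.+1.
Proof. rewrite /gen [in RHS]exprS; field; exact: expf_neq0. Qed.

Lemma sum_gen_ge0 (s : seq nat) : 0 <= \sum_(n <- s) gen n.
Proof. by apply: sumr_ge0 => n _; exact/ltW/gen_gt0. Qed.

Lemma inM_ge0 q : inM q -> 0 <= q.
Proof. by case=> a [s ->]; rewrite addr_ge0 ?ler0n ?sum_gen_ge0. Qed.

Lemma inM_gt0 q : inM q -> q != 0 -> 0 < q.
Proof. by move=> /inM_ge0 q_ge0 q_neq0; rewrite lt_neqAle eq_sym q_neq0. Qed.

Lemma sum_gen_triadic (s : seq nat) :
  exists m N, (\sum_(n <- s) gen n) * 3%:R ^+ N = (2 * m)%:R.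
Proof.
elim: s => [|n s [m [N IH]]]; first by exists 0%N, 0%N; rewrite big_nil mul0r.
exists (3 ^ N + m * 3 ^ n.+1)%N, (N + n.+1)%N.
have sum_s : \sum_(j <- s) gen j = (2 * m)%:R / 3%:R ^+ N.
  by rewrite -IH mulfK // expf_neq0.
rewrite big_cons sum_s exprD /gen !(natrM, natrD, natrX); field.
by rewrite !expf_neq0.
Qed.

(** Below 1, M only contains sums of generators. *)
Lemma inM_lt1_triadic q : inM q -> q < 1 -> exists m N, q * 3%:R ^+ N = (2 * m)%:R.
Proof.
case=> a [s ->] q_lt1.
have a0 : a = 0%N.
  apply/eqP; rewrite -leqn0 -ltnS -(ltr_nat rat).
  by apply: le_lt_trans q_lt1; rewrite lerDl sum_gen_ge0.
by rewrite a0 add0r; exact: sum_gen_triadic.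
Qed.

(** 1 = a + b with a, b ∈ (0,1) ∩ M would force the odd number 3^(Na+Nb)
    to be even. *)
Lemma one_indecomposable : ~ decomposable 1.
Proof.
case=> a [b [Ma [Mb [a0 [b0 ab1]]]]].
have a_gt0 := inM_gt0 Ma a0; have b_gt0 := inM_gt0 Mb b0.
have [ma [Na Ha]] := inM_lt1_triadic Ma (ltac:(lra)).
have [mb [Nb Hb]] := inM_lt1_triadic Mb (ltac:(lra)).
have even_pow : ((3 ^ (Na + Nb))%N%:R : rat) = (2 * (ma * 3 ^ Nb + mb * 3 ^ Na))%N%:R.
  rewrite !natrM in Ha Hb; rewrite !(natrM, natrD, natrX) exprD.
  rewrite -[LHS]mul1r [X in X * _]ab1.
  transitivity ((a * 3%:R ^+ Na) * 3%:R ^+ Nb + (b * 3%:R ^+ Nb) * 3%:R ^+ Na); first ring.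
  by rewrite Ha Hb; ring.
move/eqP: even_pow; rewrite eqr_nat => /eqP /(congr1 odd).
by rewrite oddX oddM /= orbT.
Qed.

(** Every nonzero element of M other than 1 splits off either 1 or a
    third of one of its generators. *)
Lemma decomposable_ne1 q : inM q -> q != 0 -> q != 1 -> decomposable q.
Proof.
case=> [[|a] [s def_q]] q0 q1.
  case: s def_q => [|n s] def_q; first by rewrite def_q big_nil addr0 eqxx in q0.
  exists (gen n.+1), (gen n.+1 + gen n.+1 + \sum_(j <- s) gen j).
  split; first by exists 0%N, [:: n.+1]; rewrite big_seq1 add0r.
  split; first by exists 0%N, [:: n.+1, n.+1 & s]; rewrite !big_cons add0r addrA.
  split; first by rewrite gt_eqF // gen_gt0.
  split; first by rewrite gt_eqF // ltr_pwDl ?sum_gen_ge0 // addr_gt0 // gen_gt0.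
  by rewrite def_q big_cons add0r -/(gen n) (gen_split n) !addrA.
exists 1, (a%:R + \sum_(j <- s) gen j).
split; first by exists 1%N, [::]; rewrite big_nil addr0.
split; first by exists a, s.
split; first by rewrite oner_eq0.
split; last by rewrite def_q -nat1r addrA.
by apply: contraNneq q1 => rest0; rewrite def_q -nat1r -addrA rest0 addr0.
Qed.

Lemma atomM_iff q : atomM q <-> q = 1.
Proof.
split=> [[Mq [q0 not_dec]]|->].
  by apply/eqP; apply: contraT => q1; case: not_dec; exact: decomposable_ne1.
split; first by exists 1%N, [::]; rewrite big_nil addr0.
by split; [rewrite oner_eq0 | exact: one_indecomposable].
Qed.

(** ** The monoid algebra k[M] *)

Section MonoidAlgebraFacts.
Variable k : fieldType.
Implicit Types f g h u : mpoly k.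

Definition supported_in f (e : rat) : Prop := forall q, mcoef f q != 0 -> q = e.

(** E is an exponent of f extremal in direction s (maximal for s = 1,
    minimal for s = -1). *)
Definition extremal (s : rat) f (E : rat) : Prop :=
  mcoef f E != 0 /\ forall e, mcoef f e != 0 -> s * e <= s * E.

Definition exponents f : seq rat := undup [seq p.2 | p <- f].

Lemma mcoef_single (c : k) (e q : rat) : mcoef [:: (c, e)] q = if e == q then c else 0.
Proof. by rewrite /mcoef big_cons big_nil /=; case: eqP => _; rewrite ?addr0. Qed.

Lemma single_supported (c : k) (e : rat) : supported_in [:: (c, e)] e.
Proof. by move=> q; rewrite mcoef_single; case: (eqVneq e q) => [-> | _]; rewrite ?eqxx. Qed.

Lemma mono_nonzero (e : rat) : ~ mzero (mmono k e).
Proof. by move/(_ e); rewrite mcoef_single eqxx; apply/eqP; rewrite oner_eq0. Qed.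

Lemma mmul_mono (a b : rat) : mmul (mmono k a) (mmono k b) = mmono k (a + b).
Proof. by rewrite /mmul /mmono /= mulr1. Qed.

Lemma supp_exponents f e : mcoef f e != 0 -> e \in exponents f.
Proof.
rewrite mem_undup; apply: contraR => e_notin.
rewrite /mcoef big1_seq // => p /andP [/eqP pe p_in].
by case/negP: e_notin; rewrite -pe map_f.
Qed.

Lemma supported_coef f e : ~ mzero f -> supported_in f e -> mcoef f e != 0.
Proof.
move=> f_nz f_e; apply: contra_notT f_nz => /negPn fe0 q.
by apply/eqP; apply: contraTT fe0 => fq; rewrite -(f_e q fq).
Qed.

Lemma sum_by_exponent f (F : rat -> k) :
  \sum_(a <- f) a.1 * F a.2 = \sum_(e <- exponents f) mcoef f e * F e.
Proof.
rewrite /mcoef; under [RHS]eq_bigr => e _ do rewrite big_distrl /= big_mkcond.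
rewrite exchange_big /=; apply: eq_big_seq => a a_in.
rewrite (bigD1_seq a.2) ?undup_uniq ?mem_undup ?map_f //= eqxx big1 ?addr0 //.
by move=> e /negPf; rewrite eq_sym => ->.
Qed.

Lemma mcoef_mul g h q :
  mcoef (mmul g h) q = \sum_(e <- exponents g) mcoef g e * mcoef h (q - e).
Proof.
rewrite -(sum_by_exponent g (fun e => mcoef h (q - e))).
rewrite /mcoef /mmul big_mkcond big_allpairs_dep /=.
apply: eq_bigr => a _; rewrite mulr_sumr [RHS]big_mkcond; apply: eq_bigr => b _ /=.
have -> : (b.2 == q - a.2) = (a.2 + b.2 == q).
  by apply/eqP/eqP => H; [rewrite H; ring | rewrite -H; ring].
by case: ifP; rewrite ?mulr0.
Qed.

Lemma mzero_mull g h : mzero g -> mzero (mmul g h).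
Proof. by move=> g0 q; rewrite mcoef_mul big1 // => e _; rewrite g0 mul0r. Qed.

Lemma mzero_mulr g h : mzero h -> mzero (mmul g h).
Proof. by move=> h0 q; rewrite mcoef_mul big1 // => e _; rewrite h0 mulr0. Qed.

Lemma seq_argmax (s : seq rat) (w : rat -> rat) : s != [::] ->
  exists2 E, E \in s & forall e, e \in s -> w e <= w E.
Proof.
elim: s => [//|x s IH] _; case: (eqVneq s [::]) => [->|/IH [E E_in E_max]].
  by exists x => [|e]; rewrite ?inE // => /eqP ->.
case: (lerP (w x) (w E)) => wx.
  by exists E => [|e]; rewrite inE ?E_in ?orbT // => /orP [/eqP ->|/E_max].
exists x => [|e]; rewrite inE ?eqxx // => /orP [/eqP -> //|/E_max].
by move/le_trans; apply; exact: ltW.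
Qed.

Lemma extremal_exists s f : ~ mzero f -> exists E, extremal s f E.
Proof.
move=> f_nz; set supp := [seq e <- exponents f | mcoef f e != 0].
have supp_nil : supp != [::].
  apply: contra_notN f_nz => /eqP supp0 q; apply/eqP; apply: contraT => fq.
  have : q \in supp by rewrite mem_filter fq supp_exponents.
  by rewrite supp0.
have [E E_in E_max] := seq_argmax (fun e => s * e) supp_nil.
move: E_in; rewrite mem_filter => /andP [fE _]; exists E; split=> // e fe.
by apply: E_max; rewrite mem_filter fe supp_exponents.
Qed.

(** Extremal exponents add up under multiplication, and the corresponding
    coefficients multiply: the leading term cannot cancel. *)
Lemma extremal_mul s g h Eg Eh : s != 0 ->
  extremal s g Eg -> extremal s h Eh -> extremal s (mmul g h) (Eg + Eh).
Proof.
move=> s0 [gE g_max] [hE h_max]; split.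
  have -> : mcoef (mmul g h) (Eg + Eh) = mcoef g Eg * mcoef h Eh.
    rewrite mcoef_mul (bigD1_seq Eg) ?undup_uniq ?supp_exponents //=.
    rewrite big1 ?addr0; first by congr (_ * mcoef h _); ring.
    move=> e e_neq; case: (eqVneq (mcoef g e) 0) => [->|ge]; first by rewrite mul0r.
    have e_lt : s * e < s * Eg by rewrite lt_neqAle g_max // andbT (inj_eq (mulfI s0)).
    case: (eqVneq (mcoef h (Eg + Eh - e)) 0) => [->|he]; first by rewrite mulr0.
    by have := h_max _ he; rewrite !mulrDr mulrN => ?; exfalso; lra.
  exact: mulf_neq0.
move=> q; apply: contraTT; rewrite -ltNge => q_gt; apply/negPn/eqP.
rewrite mcoef_mul big1 // => e _.
case: (eqVneq (mcoef g e) 0) => [->|ge]; first by rewrite mul0r.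
case: (eqVneq (mcoef h (q - e)) 0) => [->|he]; first by rewrite mulr0.
by have := h_max _ he; have := g_max _ ge; rewrite !mulrDr mulrN => ? ?; exfalso; lra.
Qed.

Lemma mul_nonzero g h : ~ mzero g -> ~ mzero h -> ~ mzero (mmul g h).
Proof.
move=> /(extremal_exists 1) [Eg gE] /(extremal_exists 1) [Eh hE] gh0.
by have [] := extremal_mul (oner_neq0 _) gE hE; rewrite gh0 eqxx.
Qed.

(** If a product is a multiple of a monomial, so are the factors: compare
    the largest and smallest exponents on both sides. *)
Lemma supported_mul_factors g h e : ~ mzero g -> ~ mzero h ->
  supported_in (mmul g h) e ->
  exists eg eh, [/\ supported_in g eg, supported_in h eh & eg + eh = e].
Proof.
move=> g_nz h_nz gh_e.
have [Mg [gM gM_max]] := extremal_exists 1 g_nz.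
have [Mh [hM hM_max]] := extremal_exists 1 h_nz.
have [mg [gm gm_min]] := extremal_exists (-1) g_nz.
have [mh [hm hm_min]] := extremal_exists (-1) h_nz.
have [ghM _] := extremal_mul (oner_neq0 _) (conj gM gM_max) (conj hM hM_max).
have s_neq0 : (-1 : rat) != 0 by rewrite oppr_eq0 oner_eq0.
have [ghm _] := extremal_mul s_neq0 (conj gm gm_min) (conj hm hm_min).
have := gh_e _ ghM; have := gh_e _ ghm.
have := gM_max _ gm; have := hM_max _ hm; rewrite !mul1r => ? ? ? ?.
exists Mg, Mh; split=> // q fq.
- by have := gM_max _ fq; have := gm_min _ fq; rewrite !mul1r !mulN1r => ? ?; lra.
- by have := hM_max _ fq; have := hm_min _ fq; rewrite !mul1r !mulN1r => ? ?; lra.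
Qed.

Lemma const_unit u : supported_in u 0 -> mcoef u 0 != 0 -> unitR u.
Proof.
move=> u_0 u0; have M0 : inM 0 by exists 0%N, [::]; rewrite big_nil addr0.
split; first by move=> q /u_0 ->.
exists [:: ((mcoef u 0)^-1, 0)]; split; first by move=> q /single_supported ->.
move=> q; rewrite mcoef_mul (bigD1_seq 0) ?undup_uniq ?supp_exponents //= big1 ?addr0.
  by rewrite /mone !mcoef_single; case: ifP; rewrite ?mulfV ?mulr0.
by move=> e e0; case: (eqVneq (mcoef u e) 0) => [->|/u_0 e_0]; rewrite ?mul0r ?e_0 ?eqxx in e0 *.
Qed.

(** An element with only positive exponents is not a unit: the constant
    term of u·v vanishes for every v ∈ R. *)
Lemma pos_nonunit u : (forall q, mcoef u q != 0 -> 0 < q) -> ~ unitR u.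
Proof.
move=> u_pos [_ [v [Rv uv1]]]; have := uv1 0.
rewrite /mone mcoef_single eqxx mcoef_mul big1; first by move/eqP; rewrite eq_sym oner_eq0.
move=> e _; case: (eqVneq (mcoef u e) 0) => [->|/u_pos e_gt0]; first by rewrite mul0r.
case: (eqVneq (mcoef v (0 - e)) 0) => [->|/Rv/inM_ge0]; first by rewrite mulr0.
by rewrite sub0r oppr_ge0 => ?; exfalso; lra.
Qed.

(** An irreducible multiple of x^E has an atom E as exponent: a splitting
    E = a + b in M would give the factorisation x^a · (c x^b). *)
Lemma irreducible_supported_atom f E : supported_in f E -> irreducibleR f -> atomM E.
Proof.
move=> f_E [Rf [f_nz [f_nu f_irr]]]; have fE := supported_coef f_nz f_E.
split; first exact: Rf.
split.
  by apply: contra_notN f_nu => /eqP E0; apply: const_unit; rewrite -E0.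
case=> a [b [Ma [Mb [a0 [b0 def_E]]]]].
have [] := f_irr (mmono k a) [:: (mcoef f E, b)].
- by move=> q /single_supported ->.
- by move=> q /single_supported ->.
- move=> q; rewrite /mmul /= mcoef_single mul1r -def_E.
  case: eqP => [<- //|Eq]; apply/eqP; apply: contraT => fq.
  by case: Eq; rewrite (f_E q fq).
- by apply: pos_nonunit => q /single_supported ->; exact: inM_gt0.
- by apply: pos_nonunit => q /single_supported ->; exact: inM_gt0.
Qed.

Lemma atom_mono_irreducible E : atomM E -> irreducibleR (mmono k E).
Proof.
move=> [ME [E0 E_indec]].
split; first by move=> q /single_supported ->.
split; first exact: mono_nonzero.
split; first by apply: pos_nonunit => q /single_supported ->; exact: inM_gt0.
move=> g h Rg Rh def_x.
have g_nz : ~ mzero g.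
  by move=> /(mzero_mull h) gh0; apply: (@mono_nonzero E) => q; rewrite def_x.
have h_nz : ~ mzero h.
  by move=> /(mzero_mulr g) gh0; apply: (@mono_nonzero E) => q; rewrite def_x.
have [eg [eh [g_eg h_eh def_E]]] : exists eg eh,
    [/\ supported_in g eg, supported_in h eh & eg + eh = E].
  by apply: supported_mul_factors => // q; rewrite -def_x => /single_supported.
have g_coef := supported_coef g_nz g_eg; have h_coef := supported_coef h_nz h_eh.
case: (eqVneq eg 0) => [eg0|eg0]; first by left; apply: const_unit; rewrite -eg0.
case: (eqVneq eh 0) => [eh0|eh0]; first by right; apply: const_unit; rewrite -eh0.
by case: E_indec; exists eg, eh; split; [exact: Rg _ g_coef | split; [exact: Rh _ h_coef|]].
Qed.

Lemma prod_irreducible_nonzero fs :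
  (forall g, g \in fs -> irreducibleR g) -> ~ mzero (mprod fs).
Proof.
elim: fs => [_|f fs IH irr_fs]; first exact: mono_nonzero.
have [_ [f_nz _]] := irr_fs f (mem_head f fs).
by apply: mul_nonzero f_nz (IH _) => g g_in; apply: irr_fs; rewrite inE g_in orbT.
Qed.

(** A product of n irreducibles which is a multiple of a monomial x^e has
    e = n: each factor is then a multiple of x^1. *)
Lemma supported_prod_irreducible fs e : (forall g, g \in fs -> irreducibleR g) ->
  supported_in (mprod fs) e -> e = (size fs)%:R.
Proof.
elim: fs e => [e _ one_e|f fs IH e irr_fs fs_e].
  by rewrite -(one_e 0) // mcoef_single eqxx oner_eq0.
have irr_f := irr_fs f (mem_head f fs).
have irr_tail : forall g, g \in fs -> irreducibleR g.
  by move=> g g_in; apply: irr_fs; rewrite inE g_in orbT.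
have [_ [f_nz _]] := irr_f.
have [ef [eP [f_ef P_eP <-]]] :=
  supported_mul_factors f_nz (prod_irreducible_nonzero irr_tail) fs_e.
have /atomM_iff -> := irreducible_supported_atom f_ef irr_f.
by rewrite (IH eP) // nat1r.
Qed.

Lemma supported_not_atomic f e : supported_in f e ->
  (forall n : nat, e != n%:R) -> ~ atomicR f.
Proof.
move=> f_e e_nat [fs [irr_fs f_fs]].
have fs_e : supported_in (mprod fs) e by move=> q; rewrite -f_fs; exact: f_e.
by have := e_nat (size fs); rewrite (supported_prod_irreducible irr_fs fs_e) eqxx.
Qed.

Lemma mono_nonatomic e : inM e -> (forall n : nat, e != n%:R) -> nonatomicR (mmono k e).
Proof.
move=> Me e_nat; have e_gt0 : 0 < e by apply: inM_gt0 Me (e_nat 0%N).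
split; first by move=> q /single_supported ->.
split; first exact: mono_nonzero.
split; first by apply: pos_nonunit => q /single_supported ->.
exact: supported_not_atomic (@single_supported 1 e) e_nat.
Qed.

End MonoidAlgebraFacts.

Lemma thirds_ne_nat (m n : nat) : ~~ (3 %| m)%N -> (m%:R / 3%:R : rat) != n%:R.
Proof.
move=> m3; apply: contraNneq m3 => def_m.
have -> : m = (n * 3)%N by apply/eqP; rewrite -(eqr_nat rat) natrM -def_m divfK.
exact: dvdn_mull.
Qed.

Theorem mainTheorem4 (k : fieldType) :
  (forall q : rat, atomM q <-> q = 1) /\
  (forall n : nat, ~ atomM (2%:R / 3%:R ^+ n.+1)) /\
  irreducibleR (mmono k 1) /\
  ~ atomicR (mmono k (2%:R / 3%:R)) /\
  meq (mmul (mmono k 1) (mmono k 1))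
      (mmul (mmono k (2%:R / 3%:R)) (mmul (mmono k (2%:R / 3%:R)) (mmono k (2%:R / 3%:R)))) /\
  (exists f g : mpoly k, nonatomicR f /\ nonatomicR g /\ ~ nonatomicR (mmul f g)).
Proof.
have x_irr : irreducibleR (mmono k 1) by apply: atom_mono_irreducible; exact/atomM_iff.
have M23 : inM (2%:R / 3%:R) by exists 0%N, [:: 0%N]; rewrite big_seq1 add0r expr1.
have M43 : inM (4%:R / 3%:R) by exists 0%N, [:: 0%N; 0%N]; rewrite !big_cons big_nil; apply/eqP.
have NA23 := mono_nonatomic k M23 (fun n => @thirds_ne_nat 2 n isT).
have NA43 := mono_nonatomic k M43 (fun n => @thirds_ne_nat 4 n isT).
split; first exact: atomM_iff.
split; first by move=> n /atomM_iff/eqP; rewrite lt_eqF // gen_lt1.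
split; first exact: x_irr.
split; first by case: NA23 => [_ [_ []]].
split.
  have two : (2%:R / 3%:R + (2%:R / 3%:R + 2%:R / 3%:R) : rat) = 1 + 1 by apply/eqP.
  by rewrite !mmul_mono two.
(* x^(2/3) · x^(4/3) = x^2 = x · x is atomic. *)
exists (mmono k (2%:R / 3%:R)), (mmono k (4%:R / 3%:R)); do 2!split=> //.
case=> _ [_ [_ []]]; exists [:: mmono k 1; mmono k 1]; split.
  by move=> g; rewrite !inE orbb => /eqP ->.
rewrite /mprod /= /mone -/(mmono k 0) !mmul_mono.
by have -> : (2%:R / 3%:R + 4%:R / 3%:R : rat) = 1 + (1 + 0) by apply/eqP.
Qed.
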